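(* Let $G=(V,E)$ be an infinite graph satisfying the $CD\psi(n,-K)$ condition for some $n>0$, $K>0$, with $D_\mu<\infty$ and $D_w<\infty$, where $\psi:(0,+\infty)\to\mathbb R$ is a $C^1$ concave function with $\psi>0$ and $\psi'>0$ (and $\psi(1)D_w$ in the image of $\psi$). Let $u$ be a positive solution of the heat equation $\partial_t u=\Delta u$ on $V$. Then for all vertices and all $t>0$, $$\Gamma^{\psi}(u)-\psi'(1)\frac{\partial_{t}u}{u}\leq \frac{n}{2t}+\sqrt{nKC},\qquad C=D_{\mu}\left[\psi'(1)\left(\psi^{-1}(\psi(1)D_{w})-1\right)+\psi(1)\right].$$
   Context: Graphs: $G=(V,E)$ is a connected, locally finite graph; each edge $xy$ carries a weight $w_{xy}>0$ (possibly asymmetric), and $\mu:V\to(0,\infty)$ is a vertex measure; $y\sim x$ means $xy\in E$, $\deg(x)=\sum_{y\sim x}w_{xy}<\infty$, $D_\mu=\sup_{x}\deg(x)/\mu(x)$, $D_w=\sup_{x\sim y}\deg(x)/w_{xy}$. Laplacian: $\Delta f(x)=\frac{1}{\mu(x)}\sum_{y\sim x}w_{xy}(f(y)-f(x))$. For $\psi:(0,\infty)\to\mathbb R$ and $f:V\to(0,\infty)$: $\Delta^\psi f(x)=\Delta\big[\psi\big(\tfrac{f}{f(x)}\big)\big](x)$; for $C^1$ $\psi$, $\overline\psi(s)=\psi'(1)(s-1)-(\psi(s)-\psi(1))$ and $\Gamma^\psi f=\Delta^{\overline\psi}f$; $(\Omega^\psi f)(x)=\Delta\big[\psi'\big(\tfrac{f}{f(x)}\big)\tfrac{f}{f(x)}\big(\tfrac{\Delta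 f}{f}-\tfrac{\Delta f(x)}{f(x)}\big)\big](x)$; $2\Gamma_2^\psi(f)=\Omega^\psi f+\frac{\Delta f\,\Delta^\psi f}{f}-\frac{\Delta(f\Delta^\psi f)}{f}$. The graph satisfies $CD\psi(n,K)$ if for every $f:V\to(0,\infty)$ and every vertex, $\Gamma_2^\psi(f)\ge\frac1n(\Delta^\psi f)^2+K\Gamma^\psi(f)$. $\psi^{-1}$ is the inverse function of $\psi$. A positive solution of the heat equation on $U\subset V$ is $u:V\times[0,\infty)\to(0,\infty)$, continuously differentiable in $t$, with $\partial_t u=\Delta u$ at every $x\in U$, $t\ge0$; operators are applied to $u(\cdot,t)$ at each fixed time. *)

From Stdlib Require Import Reals List Relations.
From Coquelicot Require Import Coquelicot.
Open Scope R_scope.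

Set Implicit Arguments.
Section Graph.
Variable V : Type.
(* nbrs x : duplicate-free finite list of the neighbours y ~ x (local finiteness) *)
Variable nbrs : V -> list V.
Variable w : V -> V -> R.      (* edge weights w_xy, possibly asymmetric *)
Variable mu : V -> R.

Definition adj (x y : V) : Prop := In y (nbrs x).

Definition sumL (l : list V) (g : V -> R) : R :=
  fold_right (fun y acc => g y + acc) 0 l.

Definition weighted_graph : Prop :=
  (forall x, NoDup (nbrs x)) /\
  (forall x y, adj x y <-> adj y x) /\
  (forall x, ~ adj x x) /\
  (forall x y, adj x y -> 0 < w x y) /\
  (forall x, 0 < mu x) /\
  (forall x y, clos_refl_trans V adj x y).

Definition infinite_graph : Prop := ~ exists l : list V, forall v : V, In v l.

Definition deg (x : V) : R := sumL (nbrs x) (fun y => w x y).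

Definition is_Dmu (D : R) : Prop :=
  is_lub (fun r => exists x, r = deg x / mu x) D.
Definition is_Dw (D : R) : Prop :=
  is_lub (fun r => exists x y, adj x y /\ r = deg x / w x y) D.

Definition Lap (f : V -> R) (x : V) : R :=
  / mu x * sumL (nbrs x) (fun y => w x y * (f y - f x)).

Definition DeltaPsi (psi : R -> R) (f : V -> R) (x : V) : R :=
  Lap (fun y => psi (f y / f x)) x.

Definition psibar (psi dpsi : R -> R) (s : R) : R :=
  dpsi 1 * (s - 1) - (psi s - psi 1).

Definition GammaPsi (psi dpsi : R -> R) (f : V -> R) (x : V) : R :=
  DeltaPsi (psibar psi dpsi) f x.

Definition OmegaPsi (dpsi : R -> R) (f : V -> R) (x : V) : R :=
  Lap (fun y => dpsi (f y / f x) * (f y / f x) * (Lap f y / f y - Lap f x / f x)) x.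

(* Gamma_2^psi, from 2 Gamma_2 = Omega + Df D^psi f / f - D(f D^psi f)/f *)
Definition Gamma2Psi (psi dpsi : R -> R) (f : V -> R) (x : V) : R :=
  / 2 * (OmegaPsi dpsi f x + Lap f x * DeltaPsi psi f x / f x
         - Lap (fun y => f y * DeltaPsi psi f y) x / f x).

Definition CDpsi (psi dpsi : R -> R) (n K : R) : Prop :=
  forall f : V -> R, (forall y, 0 < f y) ->
  forall x, Gamma2Psi psi dpsi f x >= / n * (DeltaPsi psi f x) ^ 2 + K * GammaPsi psi dpsi f x.

Definition heat_solution (u : V -> R -> R) : Prop :=
  (forall x t, 0 <= t -> 0 < u x t) /\
  (forall x t, 0 < t -> is_derive (u x) t (Lap (fun y => u y t) x)) /\
  (forall x, filterlim (fun h => (u x h - u x 0) / h) (at_right 0)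
                       (locally (Lap (fun y => u y 0) x))).
End Graph.

Definition good_psi (psi dpsi : R -> R) : Prop :=
  (forall s, 0 < s -> is_derive psi s (dpsi s)) /\
  (forall s, 0 < s -> continuous dpsi s) /\
  (forall a b l, 0 < a -> 0 < b -> 0 <= l <= 1 ->
       l * psi a + (1 - l) * psi b <= psi (l * a + (1 - l) * b)) /\
  (forall s, 0 < s -> 0 < psi s) /\
  (forall s, 0 < s -> 0 < dpsi s).

From Stdlib Require Import Reals List Lra.
From Coquelicot Require Import Coquelicot.
Open Scope R_scope.
Set Bullet Behavior "Strict Subproofs".

(* Along the heat flow F = Gamma^psi(u) - psi'(1) d_t u / u equals -Delta^psi u,
   and d_t Delta^psi u = Omega^psi u.  Where F > 0 the bound D_w keeps every
   ratio u(y)/u(x) of neighbours below s0, so Gamma^psi(u) <= C, and CDpsi(n,-K)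
   becomes
     d_t F <= D_mu s0 (sup F - F) - (2/n) F^2 + 2 K C.
   For c > sqrt(nKC) the barrier n/(2t) + c controls the local part.  On an
   infinite graph there is no maximum point, so instead the barrier is pushed
   forward in uniform time steps, short enough that every F(y, .) grows at most
   linearly during a step; this keeps the non-local term small at a first
   crossing. *)

Lemma is_derive_continuity_pt (g : R -> R) (t l : R) :
  is_derive g t l -> continuity_pt g t.
Proof.
  intro Hd. apply continuity_pt_filterlim.
  apply (ex_derive_continuous (K := R_AbsRing) (V := R_NormedModule)). now exists l.
Qed.

Lemma first_crossing (g dg : R -> R) (a b : R) : a < b ->
  (forall t, a <= t <= b -> is_derive g t (dg t)) -> g a <= 0 -> 0 < g b ->
  exists xi, a < xi < b /\ 0 < g xi /\ 0 < dg xi.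
Proof.
  intros Hab Hd Ha Hb.
  (* c is the last time in [a, b] at which g <= 0; then apply the MVT on [c, b]. *)
  set (E := fun t => a <= t <= b /\ g t <= 0).
  destruct (completeness E) as [c [Hub Hlub]].
  { exists b; intros t [Ht _]; lra. }
  { exists a; split; [lra | exact Ha]. }
  assert (Hac : a <= c) by (apply Hub; split; [lra | exact Ha]).
  assert (Hcb : c <= b) by (apply Hlub; intros t [Ht _]; lra).
  assert (Hpos : forall t, c < t <= b -> 0 < g t).
  { intros t Ht. apply Rnot_le_lt; intro Hgt.
    assert (t <= c) by (apply Hub; split; [lra | exact Hgt]). lra. }
  assert (Hgc : g c <= 0).
  { apply Rnot_lt_le; intro Hgc.
    assert (Hcont := is_derive_continuity_pt g c (dg c) (Hd c (conj Hac Hcb))).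
    destruct (proj1 (continuity_pt_locally g c) Hcont (mkposreal _ Hgc))
      as [alp Hnear].
    assert (Hup : is_upper_bound E (c - alp / 2)).
    { intros t [Ht Hgt]. apply Rnot_lt_le; intro Hlt.
      assert (t <= c) by (apply Hub; split; assumption).
      assert (Hball : ball c alp t).
      { unfold ball; simpl; unfold AbsRing_ball, abs, minus, plus, opp; simpl.
        destruct alp as [alp Halp]; simpl in *. apply Rabs_def1; lra. }
      specialize (Hnear t Hball); simpl in Hnear.
      apply Rabs_def2 in Hnear. lra. }
    specialize (Hlub _ Hup). destruct alp; simpl in *; lra. }
  assert (Hcb' : c < b) by (destruct Hcb as [h | ->]; lra).
  destruct (MVT_cor2 g dg c b Hcb') as [xi [Heq Hxi]].
  { intros t Ht. apply is_derive_Reals, Hd. lra. }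
  exists xi. split; [lra |]. split; [apply Hpos; lra |].
  apply Rnot_le_lt; intro Hdg.
  assert (dg xi * (b - c) <= 0) by (apply Rmult_le_0_r; lra). lra.
Qed.

Lemma strict_incr_of_pos_derive (f df : R -> R) :
  (forall s, 0 < s -> is_derive f s (df s)) -> (forall s, 0 < s -> 0 < df s) ->
  forall a b, 0 < a < b -> f a < f b.
Proof.
  intros Hd Hpos a b [Ha Hab].
  destruct (MVT_cor2 f df a b Hab) as [c [Heq Hc]].
  { intros c Hc. apply is_derive_Reals, Hd. lra. }
  assert (0 < df c * (b - a)) by (apply Rmult_lt_0_compat; [apply Hpos |]; lra). lra.
Qed.

Lemma sqrt_plus_sqr_gt (r eps : R) : 0 < eps -> r < (sqrt r + eps) ^ 2.
Proof.
  intro Heps. assert (Hs := sqrt_pos r).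
  destruct (Rle_or_lt 0 r) as [Hr | Hr]; [| nra].
  rewrite <- (sqrt_sqrt r Hr) at 1. nra.
Qed.

Section Comparison.
Variable J : Type.
Variables phi dphi : J -> R -> R.
Variables n c A B P : R.
Hypothesis Hn : 0 < n.
Hypothesis Hc : 0 < c.
Hypothesis HB : n * B < 2 * c ^ 2.
Hypothesis HA : 0 <= A.
Hypothesis Hphi_derive : forall z t, 0 < t -> is_derive (phi z) t (dphi z t).
Hypothesis Hphi_le : forall z t, 0 < t -> phi z t <= P.
Hypothesis Hdphi_le : forall z t M, 0 < t -> 0 < phi z t -> (forall y, phi y t <= M) ->
  dphi z t <= A * (M - phi z t) - 2 / n * phi z t ^ 2 + B.

Let L := Rmax 0 (A * P + B).

Lemma dphi_le_growth (z : J) (t : R) : 0 < t -> 0 < phi z t -> dphi z t <= L.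
Proof.
  intros Ht Hz.
  assert (Hd := Hdphi_le z t P Ht Hz (fun y => Hphi_le y t Ht)).
  assert (A * (P - phi z t) <= A * P) by (apply Rmult_le_compat_l; lra).
  assert (0 <= 2 / n * phi z t ^ 2)
    by (apply Rmult_le_pos; [apply Rlt_le, Rdiv_lt_0_compat | apply pow2_ge_0]; lra).
  assert (A * P + B <= L) by apply Rmax_r. lra.
Qed.

Lemma phi_upper_growth (z : J) (a s : R) : 0 < a <= s -> phi z s <= Rmax (phi z a) 0 + L * (s - a).
Proof.
  intros [Ha Has]. assert (Hmax := Rmax_l (phi z a) 0).
  destruct Has as [Has | <-]; [| lra].
  apply Rnot_lt_le; intro Hgt.
  destruct (first_crossing (fun t => phi z t - (Rmax (phi z a) 0 + L * (t - a)))
              (fun t => dphi z t - L) a s Has) as [xi [Hxi [Hpos Hslope]]].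
  - intros t Ht.
    apply (is_derive_minus (K := R_AbsRing) (V := R_NormedModule) _ _ _ _ L);
      [apply Hphi_derive; lra |].
    auto_derive; [exact I | ring].
  - lra.
  - lra.
  - assert (0 <= L * (xi - a)) by (apply Rmult_le_pos; [apply Rmax_l | lra]).
    assert (Hmax0 := Rmax_r (phi z a) 0).
    assert (dphi z xi <= L) by (apply dphi_le_growth; lra). lra.
Qed.

Definition barrier (t : R) : R := n / (2 * t) + c.

Lemma barrier_derive (t : R) : 0 < t -> is_derive barrier t (- n / (2 * t ^ 2)).
Proof. intro Ht. unfold barrier. auto_derive; [lra | field; lra]. Qed.

Lemma barrier_nonneg (t : R) : 0 < t -> 0 <= barrier t.
Proof.
  intro Ht. unfold barrier. assert (0 < n / (2 * t)) by (apply Rdiv_lt_0_compat; lra). lra.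
Qed.

Lemma barrier_le (s t : R) : 0 < s <= t -> barrier t <= barrier s.
Proof.
  intros [Hs Hst]. unfold barrier, Rdiv. apply Rplus_le_compat_r, Rmult_le_compat_l; [lra |].
  apply Rinv_le_contravar; lra.
Qed.

Lemma barrier_diff_le (a0 a d : R) : 0 < a0 <= a -> 0 <= d ->
  barrier a - barrier (a + d) <= n / (2 * a0 ^ 2) * d.
Proof.
  intros [Ha0 Ha] Hd.
  replace (barrier a - barrier (a + d)) with (n * d * / (2 * (a * (a + d))))
    by (unfold barrier; field; lra).
  replace (n / (2 * a0 ^ 2) * d) with (n * d * / (2 * (a0 * a0))) by (field; lra).
  apply Rmult_le_compat_l; [apply Rmult_le_pos; lra |].
  apply Rinv_le_contravar; [nra | nra].
Qed.

Definition below_barrier (tau : R) : Prop :=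
  forall y s, 0 < s <= tau -> phi y s <= barrier s.

Lemma below_barrier_mono (a b : R) : a <= b -> below_barrier b -> below_barrier a.
Proof. intros Hab Hb y s Hs. apply Hb. lra. Qed.

Lemma below_barrier_early : exists t0, 0 < t0 /\ below_barrier t0.
Proof.
  assert (HP := Rabs_pos P).
  exists (n / (2 * (Rabs P + 1))). split; [apply Rdiv_lt_0_compat; lra |].
  intros y s [Hs Hst].
  assert (Hinv : Rabs P + 1 <= n / (2 * s)).
  { apply (Rmult_le_reg_r (2 * s)); [lra |].
    replace (n / (2 * s) * (2 * s)) with n by (field; lra).
    apply (Rmult_le_compat_l (2 * (Rabs P + 1))) in Hst; [| lra].
    replace (2 * (Rabs P + 1) * (n / (2 * (Rabs P + 1)))) with n in Hst by (field; lra).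
    lra. }
  assert (Hy := Hphi_le y s Hs). assert (P <= Rabs P) by apply RRle_abs.
  unfold barrier. lra.
Qed.

Lemma phi_le_after_step (z : J) (a d s : R) : 0 < a -> 0 < d -> a <= s <= a + d ->
  below_barrier a -> phi z s <= barrier a + L * d.
Proof.
  intros Ha Hd Hs Hgood.
  assert (Hgrow := phi_upper_growth z a s (conj Ha (proj1 Hs))).
  assert (Hza := Hgood z a (conj Ha (Rle_refl a))).
  assert (Hba := barrier_nonneg a Ha).
  assert (Rmax (phi z a) 0 <= barrier a) by (apply Rmax_lub; lra).
  assert (L * (s - a) <= L * d) by (apply Rmult_le_compat_l; [apply Rmax_l | lra]).
  lra.
Qed.

(* At the first crossing point xi the non-local term A (M - phi) is small by
   phi_le_after_step, and the quadratic term then forces phi' below barrier'. *)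
Lemma below_barrier_extend (a d : R) : 0 < a -> 0 < d ->
  A * (barrier a - barrier (a + d) + L * d) < 2 * c ^ 2 / n - B ->
  below_barrier a -> below_barrier (a + d).
Proof.
  intros Ha Hd Hstep Hgood y s [Hs Hsad].
  apply Rnot_lt_le; intro Hys.
  assert (Has : a < s).
  { apply Rnot_le_lt; intro Hsa. specialize (Hgood y s (conj Hs Hsa)). lra. }
  destruct (first_crossing (fun t => phi y t - barrier t)
              (fun t => dphi y t - - n / (2 * t ^ 2)) a s Has)
    as [xi [Hxi [Hcross Hslope]]]; cbv beta in *.
  - intros t Ht.
    apply (is_derive_minus (K := R_AbsRing) (V := R_NormedModule));
      [apply Hphi_derive | apply barrier_derive]; lra.
  - specialize (Hgood y a (conj Ha (Rle_refl a))). lra.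
  - lra.
  - set (M := barrier a + L * d).
    assert (HM : forall z, phi z xi <= M) by (intro z; apply phi_le_after_step; auto; lra).
    assert (Hxi0 : 0 < xi) by lra.
    assert (Hbxi0 := barrier_nonneg xi Hxi0).
    assert (Hdphi := Hdphi_le y xi M Hxi0 ltac:(lra) HM).
    assert (Hbxi : barrier (a + d) <= barrier xi) by (apply barrier_le; lra).
    assert (A * (M - phi y xi) <= A * (M - barrier xi)) by (apply Rmult_le_compat_l; lra).
    assert (A * (M - barrier xi) <= A * (barrier a - barrier (a + d) + L * d))
      by (apply Rmult_le_compat_l; unfold M; lra).
    assert (Hsq : 2 / n * barrier xi ^ 2 <= 2 / n * phi y xi ^ 2).
    { apply Rmult_le_compat_l; [apply Rlt_le, Rdiv_lt_0_compat; lra |].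
      apply pow_incr. lra. }
    replace (2 / n * barrier xi ^ 2)
      with (n / (2 * xi ^ 2) + 2 * c / xi + 2 * c ^ 2 / n) in Hsq by (unfold barrier; field; lra).
    assert (0 < 2 * c / xi) by (apply Rdiv_lt_0_compat; lra).
    replace (- n / (2 * xi ^ 2)) with (- (n / (2 * xi ^ 2))) in Hslope by (field; lra).
    lra.
Qed.

Lemma below_barrier_all (T : R) : below_barrier T.
Proof.
  destruct below_barrier_early as [t0 [Ht0 Hgood0]].
  set (Q := A * (n / (2 * t0 ^ 2) + L)).
  assert (HQ : 0 <= Q).
  { apply Rmult_le_pos; [exact HA |].
    assert (0 < n / (2 * t0 ^ 2))
      by (apply Rdiv_lt_0_compat; [lra | apply Rmult_lt_0_compat; [lra | apply pow_lt; lra]]).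
    assert (0 <= L) by apply Rmax_l. lra. }
  assert (Hgap : 0 < 2 * c ^ 2 / n - B).
  { replace (2 * c ^ 2 / n - B) with ((2 * c ^ 2 - n * B) / n) by (field; lra).
    apply Rdiv_lt_0_compat; lra. }
  set (d := (2 * c ^ 2 / n - B) / (2 * (Q + 1))).
  assert (Hd : 0 < d) by (apply Rdiv_lt_0_compat; lra).
  assert (HQd : Q * d < 2 * c ^ 2 / n - B).
  { unfold d. apply (Rmult_lt_reg_r (2 * (Q + 1))); [lra |].
    replace (Q * ((2 * c ^ 2 / n - B) / (2 * (Q + 1))) * (2 * (Q + 1)))
      with (Q * (2 * c ^ 2 / n - B)) by (field; lra). nra. }
  assert (Hsteps : forall k, below_barrier (t0 + INR k * d)).
  { induction k as [| k IH]; [rewrite Rmult_0_l, Rplus_0_r; exact Hgood0 |].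
    assert (Hk := pos_INR k). rewrite S_INR.
    replace (t0 + (INR k + 1) * d) with (t0 + INR k * d + d) by ring.
    apply below_barrier_extend; [nra | exact Hd | | exact IH].
    assert (Hdiff := barrier_diff_le t0 (t0 + INR k * d) d ltac:(nra) (Rlt_le _ _ Hd)).
    apply Rle_lt_trans with (Q * d); [| exact HQd].
    unfold Q. rewrite Rmult_assoc, Rmult_plus_distr_r.
    apply Rmult_le_compat_l; lra. }
  destruct (INR_archimed d T Hd) as [k Hk].
  apply (below_barrier_mono T (t0 + INR k * d)); [lra | apply Hsteps].
Qed.

Lemma phi_le_barrier (z : J) (T : R) : 0 < T -> phi z T <= barrier T.
Proof. intro HT. apply (below_barrier_all T z T). lra. Qed.
End Comparison.

Section SumL.
Variable V : Type.

Lemma sumL_ext (l : list V) (g h : V -> R) :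
  (forall y, In y l -> g y = h y) -> sumL l g = sumL l h.
Proof.
  induction l as [| a l IH]; intro H; simpl; [reflexivity |].
  rewrite H, IH; [reflexivity | intros y Hy; apply H; now right | now left].
Qed.

Lemma sumL_comb (l : list V) (a b : R) (g h : V -> R) :
  a * sumL l g + b * sumL l h = sumL l (fun y => a * g y + b * h y).
Proof. induction l as [| x l IH]; simpl; [ring |]. rewrite <- IH. ring. Qed.

Lemma sumL_opp (l : list V) (g : V -> R) : - sumL l g = sumL l (fun y => - g y).
Proof. induction l as [| x l IH]; simpl; [ring |]. rewrite <- IH. ring. Qed.

Lemma sumL_le (l : list V) (g h : V -> R) :
  (forall y, In y l -> g y <= h y) -> sumL l g <= sumL l h.
Proof.
  induction l as [| x l IH]; intro H; simpl; [lra |].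
  apply Rplus_le_compat; [apply H; now left | apply IH; intros y Hy; apply H; now right].
Qed.

Lemma sumL_const (l : list V) (g : V -> R) (k : R) :
  sumL l (fun y => g y * k) = sumL l g * k.
Proof. induction l as [| x l IH]; simpl; [ring |]. rewrite IH. ring. Qed.

Lemma sumL_nonneg (l : list V) (g : V -> R) :
  (forall y, In y l -> 0 <= g y) -> 0 <= sumL l g.
Proof.
  intro H. apply Rle_trans with (sumL l (fun y => g y * 0)).
  - rewrite sumL_const. lra.
  - apply sumL_le. intros y Hy. rewrite Rmult_0_r. now apply H.
Qed.

Lemma sumL_elem_le (l : list V) (g : V -> R) (z : V) :
  (forall y, In y l -> 0 <= g y) -> In z l -> g z <= sumL l g.
Proof.
  induction l as [| x l IH]; intros H Hz; [destruct Hz | simpl].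
  assert (Hx : 0 <= g x) by (apply H; now left).
  assert (Hl : forall y, In y l -> 0 <= g y) by (intros y Hy; apply H; now right).
  destruct Hz as [<- | Hz].
  - assert (0 <= sumL l g) by now apply sumL_nonneg. lra.
  - assert (g z <= sumL l g) by now apply IH. lra.
Qed.

Lemma sumL_derive (l : list V) (G : V -> R -> R) (dG : V -> R) (t : R) :
  (forall y, In y l -> is_derive (G y) t (dG y)) ->
  is_derive (fun s => sumL l (fun y => G y s)) t (sumL l dG).
Proof.
  induction l as [| x l IH]; intro H; simpl.
  - apply (is_derive_const (K := R_AbsRing) (V := R_NormedModule)).
  - apply (is_derive_plus (K := R_AbsRing) (V := R_NormedModule));
      [apply H; now left | apply IH; intros y Hy; apply H; now right].
Qed.
End SumL.

Section Laplacian.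
Variable V : Type.
Variable nbrs : V -> list V.
Variable w : V -> V -> R.
Variable mu : V -> R.

Lemma Lap_comb (a b : R) (f g : V -> R) (x : V) :
  a * Lap nbrs w mu f x + b * Lap nbrs w mu g x
  = Lap nbrs w mu (fun y => a * f y + b * g y) x.
Proof.
  unfold Lap. replace (a * (/ mu x * _) + b * (/ mu x * _))
    with (/ mu x * (a * sumL (nbrs x) (fun y => w x y * (f y - f x))
                    + b * sumL (nbrs x) (fun y => w x y * (g y - g x)))) by ring.
  rewrite sumL_comb. f_equal. apply sumL_ext. intros y _. ring.
Qed.

Lemma Lap_shift (f g : V -> R) (k : R) (x : V) :
  (forall y, f y = g y + k) -> Lap nbrs w mu f x = Lap nbrs w mu g x.
Proof.
  intro H. unfold Lap. f_equal. apply sumL_ext. intros y _. rewrite !H. ring.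
Qed.

Variables psi dpsi : R -> R.

Lemma GammaPsi_eq (f : V -> R) (x : V) : f x <> 0 ->
  GammaPsi nbrs w mu psi dpsi f x
  = dpsi 1 * (Lap nbrs w mu f x / f x) - DeltaPsi nbrs w mu psi f x.
Proof.
  intro Hx. unfold GammaPsi, DeltaPsi.
  replace (dpsi 1 * (Lap nbrs w mu f x / f x) - Lap nbrs w mu (fun y => psi (f y / f x)) x)
    with (dpsi 1 / f x * Lap nbrs w mu f x + -1 * Lap nbrs w mu (fun y => psi (f y / f x)) x)
    by (field; exact Hx).
  rewrite Lap_comb. apply Lap_shift with (k := psi 1 - dpsi 1).
  intro y. unfold psibar. field. exact Hx.
Qed.

Lemma neg_DeltaPsi_eq (f : V -> R) (x : V) : f x <> 0 ->
  - DeltaPsi nbrs w mu psi f x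
  = / mu x * sumL (nbrs x) (fun y => w x y * (psi 1 - psi (f y / f x))).
Proof.
  intro Hx. unfold DeltaPsi, Lap.
  replace (f x / f x) with 1 by (field; exact Hx).
  rewrite Ropp_mult_distr_r, sumL_opp. f_equal. apply sumL_ext. intros y _. ring.
Qed.

Lemma Lap_mul_defect (f g : V -> R) (x : V) : f x <> 0 ->
  Lap nbrs w mu f x * g x / f x - Lap nbrs w mu (fun y => f y * g y) x / f x
  = - (/ mu x * sumL (nbrs x) (fun y => w x y * (f y / f x * (g y - g x)))).
Proof.
  intro Hx.
  replace (Lap nbrs w mu f x * g x / f x - Lap nbrs w mu (fun y => f y * g y) x / f x)
    with (g x / f x * Lap nbrs w mu f x + - / f x * Lap nbrs w mu (fun y => f y * g y) x)
    by (field; exact Hx).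
  rewrite Lap_comb. unfold Lap. rewrite Ropp_mult_distr_r, sumL_opp.
  f_equal. apply sumL_ext. intros y _. field. exact Hx.
Qed.
End Laplacian.

Section HeatFlow.
Variable V : Type.
Variable nbrs : V -> list V.
Variable w : V -> V -> R.
Variable mu : V -> R.
Variables psi dpsi : R -> R.
Variable u : V -> R -> R.
Hypothesis Hpsi_derive : forall s, 0 < s -> is_derive psi s (dpsi s).
Hypothesis Hu_pos : forall x t, 0 <= t -> 0 < u x t.
Hypothesis Hu_heat : forall x t, 0 < t -> is_derive (u x) t (Lap nbrs w mu (fun y => u y t) x).

Lemma psi_ratio_derive (x y : V) (t : R) : 0 < t ->
  is_derive (fun s => psi (u y s / u x s)) t
    (dpsi (u y t / u x t) * (u y t / u x t)
     * (Lap nbrs w mu (fun z => u z t) y / u y t - Lap nbrs w mu (fun z => u z t) x / u x t)).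
Proof.
  intro Ht. assert (Hx := Hu_pos x t (Rlt_le _ _ Ht)). assert (Hy := Hu_pos y t (Rlt_le _ _ Ht)).
  set (Lx := Lap nbrs w mu (fun z => u z t) x). set (Ly := Lap nbrs w mu (fun z => u z t) y).
  replace (dpsi (u y t / u x t) * (u y t / u x t) * (Ly / u y t - Lx / u x t))
    with ((Ly * u x t - u y t * Lx) / u x t ^ 2 * dpsi (u y t / u x t)) by (field; lra).
  apply (is_derive_comp psi (fun s => u y s / u x s)).
  - apply Hpsi_derive, Rdiv_lt_0_compat; assumption.
  - apply is_derive_div; [apply Hu_heat | apply Hu_heat | lra]; exact Ht.
Qed.

Lemma DeltaPsi_heat_derive (x : V) (t : R) : 0 < t ->
  is_derive (fun s => DeltaPsi nbrs w mu psi (fun y => u y s) x) t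
    (OmegaPsi nbrs w mu dpsi (fun y => u y t) x).
Proof.
  intro Ht. unfold DeltaPsi, OmegaPsi, Lap at 1 3.
  apply is_derive_scal.
  apply (sumL_derive _ (nbrs x) (fun y s => w x y * (psi (u y s / u x s) - psi (u x s / u x s)))).
  intros y _. apply is_derive_scal.
  apply (is_derive_minus (K := R_AbsRing) (V := R_NormedModule)); apply psi_ratio_derive; exact Ht.
Qed.

Lemma GammaPsi_heat_eq (x : V) (t : R) : 0 < t ->
  GammaPsi nbrs w mu psi dpsi (fun y => u y t) x - dpsi 1 * (Derive (u x) t / u x t)
  = - DeltaPsi nbrs w mu psi (fun y => u y t) x.
Proof.
  intro Ht. rewrite (is_derive_unique _ _ _ (Hu_heat x t Ht)).
  rewrite GammaPsi_eq by (apply Rgt_not_eq, Hu_pos; lra). ring.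
Qed.
End HeatFlow.

Section Bounds.
Variable V : Type.
Variable nbrs : V -> list V.
Variable w : V -> V -> R.
Variable mu : V -> R.
Variables psi dpsi : R -> R.
Variables Dmu Dw s0 : R.
Hypothesis Hw : forall x y, In y (nbrs x) -> 0 < w x y.
Hypothesis Hmu : forall x, 0 < mu x.
Hypothesis HDmu : forall x, deg nbrs w x / mu x <= Dmu.
Hypothesis HDw : forall x y, In y (nbrs x) -> deg nbrs w x / w x y <= Dw.
Hypothesis Hpsi_derive : forall s, 0 < s -> is_derive psi s (dpsi s).
Hypothesis Hpsi_pos : forall s, 0 < s -> 0 < psi s.
Hypothesis Hdpsi_pos : forall s, 0 < s -> 0 < dpsi s.
Hypothesis Hs0 : 0 < s0.
Hypothesis Hs0_def : psi s0 = psi 1 * Dw.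
Variable f : V -> R.
Hypothesis Hf : forall y, 0 < f y.

Local Notation phi x := (- DeltaPsi nbrs w mu psi f x).

Lemma deg_nonneg (x : V) : 0 <= deg nbrs w x.
Proof. apply sumL_nonneg. intros y Hy. now apply Rlt_le, Hw. Qed.

Lemma Dmu_nonneg (x : V) : 0 <= Dmu.
Proof.
  apply Rle_trans with (deg nbrs w x / mu x); [| apply HDmu].
  apply Rmult_le_pos; [apply deg_nonneg | apply Rlt_le, Rinv_0_lt_compat, Hmu].
Qed.

Lemma avg_le (x : V) (g : V -> R) (k : R) : 0 <= k ->
  (forall y, In y (nbrs x) -> g y <= k) ->
  / mu x * sumL (nbrs x) (fun y => w x y * g y) <= Dmu * k.
Proof.
  intros Hk Hg.
  apply Rle_trans with (/ mu x * sumL (nbrs x) (fun y => w x y * k)).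
  - apply Rmult_le_compat_l; [apply Rlt_le, Rinv_0_lt_compat, Hmu |].
    apply sumL_le. intros y Hy. apply Rmult_le_compat_l; [apply Rlt_le, Hw | apply Hg]; exact Hy.
  - rewrite (sumL_const _ (nbrs x) (fun y => w x y) k). fold (deg nbrs w x).
    replace (/ mu x * (deg nbrs w x * k)) with (deg nbrs w x / mu x * k) by (unfold Rdiv; ring).
    apply Rmult_le_compat_r; [exact Hk | apply HDmu].
Qed.

Lemma neg_DeltaPsi_le (x : V) : phi x <= Dmu * psi 1.
Proof.
  rewrite neg_DeltaPsi_eq by (apply Rgt_not_eq, Hf).
  assert (H1 := Hpsi_pos 1 Rlt_0_1).
  apply avg_le; [lra |]. intros y _.
  assert (0 < psi (f y / f x)) by (apply Hpsi_pos, Rdiv_lt_0_compat; apply Hf). lra.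
Qed.

Lemma nbrs_nonempty (x : V) : 0 < phi x -> exists z, In z (nbrs x).
Proof.
  rewrite neg_DeltaPsi_eq by (apply Rgt_not_eq, Hf).
  destruct (nbrs x) as [| z l]; [simpl; lra | now exists z; left].
Qed.

Lemma one_le_s0 (x z : V) : In z (nbrs x) -> 1 <= s0.
Proof.
  intro Hz. assert (Hwz := Hw x z Hz).
  assert (Hdeg : w x z <= deg nbrs w x)
    by (apply (sumL_elem_le _ _ (fun y => w x y)); [intros y Hy; now apply Rlt_le, Hw | exact Hz]).
  assert (HDw1 : 1 <= Dw).
  { apply Rle_trans with (deg nbrs w x / w x z); [| now apply HDw].
    apply (Rmult_le_reg_r (w x z)); [exact Hwz |].
    replace (deg nbrs w x / w x z * w x z) with (deg nbrs w x) by (field; lra). lra. }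
  apply Rnot_lt_le; intro Hlt.
  assert (psi s0 < psi 1) by (apply (strict_incr_of_pos_derive psi dpsi); auto; lra).
  assert (H1 := Hpsi_pos 1 Rlt_0_1).
  assert (psi 1 * 1 <= psi 1 * Dw) by (apply Rmult_le_compat_l; lra). lra.
Qed.

Lemma psi_weight_sum_lt (x : V) : 0 < phi x ->
  sumL (nbrs x) (fun y => w x y * psi (f y / f x)) < deg nbrs w x * psi 1.
Proof.
  intro Hphi. rewrite neg_DeltaPsi_eq in Hphi by (apply Rgt_not_eq, Hf).
  set (S := sumL (nbrs x) (fun y => w x y * psi (f y / f x))).
  assert (Hsplit : sumL (nbrs x) (fun y => w x y * (psi 1 - psi (f y / f x)))
                   = deg nbrs w x * psi 1 - S).
  { unfold S, deg. rewrite <- sumL_const.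
    replace (sumL (nbrs x) (fun y => w x y * psi 1) - sumL (nbrs x) (fun y => w x y * psi (f y / f x)))
      with (1 * sumL (nbrs x) (fun y => w x y * psi 1)
            + -1 * sumL (nbrs x) (fun y => w x y * psi (f y / f x))) by ring.
    rewrite sumL_comb. apply sumL_ext. intros y _. ring. }
  rewrite Hsplit in Hphi. assert (Hm := Hmu x).
  apply Rnot_le_lt; intro Hle.
  assert (/ mu x * (deg nbrs w x * psi 1 - S) <= 0)
    by (apply Rmult_le_0_l; [apply Rlt_le, Rinv_0_lt_compat |]; lra).
  lra.
Qed.

(* Otherwise the single term w_xz psi(f z/f x) >= w_xz psi(s0) = w_xz D_w psi(1)
   would already reach deg(x) psi(1). *)
Lemma ratio_lt_s0 (x z : V) : 0 < phi x -> In z (nbrs x) -> f z / f x < s0.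
Proof.
  intros Hphi Hz. assert (Hwz := Hw x z Hz).
  assert (Hsum := psi_weight_sum_lt x Hphi).
  assert (Hz_le : w x z * psi (f z / f x) <= sumL (nbrs x) (fun y => w x y * psi (f y / f x))).
  { apply (sumL_elem_le _ _ (fun y => w x y * psi (f y / f x))); [| exact Hz].
    intros y Hy. apply Rmult_le_pos; [apply Rlt_le, Hw; exact Hy |].
    apply Rlt_le, Hpsi_pos, Rdiv_lt_0_compat; apply Hf. }
  assert (Hdeg : deg nbrs w x * psi 1 <= w x z * psi s0).
  { rewrite Hs0_def. assert (HD := HDw x z Hz). assert (H1 := Hpsi_pos 1 Rlt_0_1).
    replace (w x z * (psi 1 * Dw)) with (w x z * Dw * psi 1) by ring.
    apply Rmult_le_compat_r; [lra |].
    apply (Rmult_le_reg_r (/ w x z)); [apply Rinv_0_lt_compat; lra |].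
    replace (w x z * Dw * / w x z) with Dw by (field; lra). exact HD. }
  apply Rnot_le_lt; intro Hge.
  assert (psi s0 <= psi (f z / f x)).
  { destruct Hge as [Hlt | Heq]; [| rewrite Heq; lra].
    apply Rlt_le, (strict_incr_of_pos_derive psi dpsi); auto. }
  assert (w x z * psi s0 <= w x z * psi (f z / f x)) by (apply Rmult_le_compat_l; lra). lra.
Qed.

Lemma GammaPsi_le (x : V) : 0 < phi x ->
  GammaPsi nbrs w mu psi dpsi f x <= Dmu * (dpsi 1 * (s0 - 1) + psi 1).
Proof.
  intro Hphi. destruct (nbrs_nonempty x Hphi) as [z Hz].
  assert (Hs1 := one_le_s0 x z Hz). assert (Hx := Hf x).
  assert (H1 := Hpsi_pos 1 Rlt_0_1). assert (H1' := Hdpsi_pos 1 Rlt_0_1).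
  unfold GammaPsi, DeltaPsi, Lap. replace (f x / f x) with 1 by (field; lra).
  apply avg_le.
  - assert (0 <= dpsi 1 * (s0 - 1)) by (apply Rmult_le_pos; lra). lra.
  - intros y Hy. assert (Hr := ratio_lt_s0 x y Hphi Hy).
    assert (0 < psi (f y / f x)) by (apply Hpsi_pos, Rdiv_lt_0_compat; apply Hf).
    assert (dpsi 1 * (f y / f x - 1) <= dpsi 1 * (s0 - 1)) by (apply Rmult_le_compat_l; lra).
    unfold psibar. lra.
Qed.

Lemma Lap_mul_defect_le (x : V) (M : R) : 0 < phi x -> (forall y, phi y <= M) ->
  Lap nbrs w mu f x * DeltaPsi nbrs w mu psi f x / f x
  - Lap nbrs w mu (fun y => f y * DeltaPsi nbrs w mu psi f y) x / f x
  <= Dmu * s0 * (M - phi x).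
Proof.
  intros Hphi HM. rewrite Lap_mul_defect by (apply Rgt_not_eq, Hf).
  rewrite Ropp_mult_distr_r, sumL_opp, Rmult_assoc.
  rewrite (sumL_ext _ _ _ (fun y => w x y * (f y / f x * (phi y - phi x))))
    by (intros y _; ring).
  assert (HMx := HM x).
  apply avg_le; [apply Rmult_le_pos; lra |].
  intros y Hy. assert (Hr := ratio_lt_s0 x y Hphi Hy).
  assert (Hr0 : 0 < f y / f x) by (apply Rdiv_lt_0_compat; apply Hf).
  assert (HMy := HM y).
  apply Rle_trans with (f y / f x * (M - phi x));
    [apply Rmult_le_compat_l | apply Rmult_le_compat_r]; lra.
Qed.

Variables n K : R.
Hypothesis Hn : 0 < n.
Hypothesis HK : 0 < K.
Hypothesis HCD : CDpsi nbrs w mu psi dpsi n (- K).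

Lemma neg_OmegaPsi_le (x : V) (M : R) : 0 < phi x -> (forall y, phi y <= M) ->
  - OmegaPsi nbrs w mu dpsi f x
  <= Dmu * s0 * (M - phi x) - 2 / n * phi x ^ 2
     + 2 * K * (Dmu * (dpsi 1 * (s0 - 1) + psi 1)).
Proof.
  intros Hphi HM.
  assert (HCDx := HCD f Hf x). unfold Gamma2Psi in HCDx.
  assert (Hdefect := Lap_mul_defect_le x M Hphi HM).
  assert (HG := GammaPsi_le x Hphi).
  assert (K * GammaPsi nbrs w mu psi dpsi f x <= K * (Dmu * (dpsi 1 * (s0 - 1) + psi 1)))
    by (apply Rmult_le_compat_l; lra).
  replace (/ n * DeltaPsi nbrs w mu psi f x ^ 2) with (/ 2 * (2 / n * phi x ^ 2)) in HCDx
    by (field; lra).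
  lra.
Qed.
End Bounds.

Theorem mainTheorem8
  (V : Type) (nbrs : V -> list V) (w : V -> V -> R) (mu : V -> R)
  (psi dpsi : R -> R) (n K Dmu Dw s0 : R) (u : V -> R -> R) :
  weighted_graph nbrs w mu ->
  infinite_graph V ->
  is_Dmu nbrs w mu Dmu ->
  is_Dw nbrs w Dw ->
  good_psi psi dpsi ->
  0 < n -> 0 < K ->
  CDpsi nbrs w mu psi dpsi n (- K) ->
  (* s0 = psi^{-1}(psi(1) D_w), psi(1) D_w being in the image of psi *)
  0 < s0 -> psi s0 = psi 1 * Dw ->
  heat_solution nbrs w mu u ->
  forall (x : V) (t : R), 0 < t ->
    GammaPsi nbrs w mu psi dpsi (fun y => u y t) x - dpsi 1 * (Derive (u x) t / u x t)
    <= n / (2 * t) + sqrt (n * K * (Dmu * (dpsi 1 * (s0 - 1) + psi 1))).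
Proof.
  intros [_ [_ [_ [Hw [Hmu _]]]]] _ [HDmu _] [HDw _] [Hpsi_derive [_ [_ [Hpsi_pos Hdpsi_pos]]]]
         Hn HK HCD Hs0 Hs0_def [Hu_pos [Hu_heat _]] x t Ht.
  assert (HDmu' : forall z, deg nbrs w z / mu z <= Dmu) by (intro z; apply HDmu; now exists z).
  assert (HDw' : forall z y, In y (nbrs z) -> deg nbrs w z / w z y <= Dw)
    by (intros z y Hy; apply HDw; now exists z, y).
  assert (HDmu0 := Dmu_nonneg V nbrs w mu Dmu Hw Hmu HDmu' x).
  set (C := Dmu * (dpsi 1 * (s0 - 1) + psi 1)).
  rewrite GammaPsi_heat_eq by auto.
  apply Rle_plus_epsilon. intros eps Heps.
  assert (Hc2 := sqrt_plus_sqr_gt (n * K * C) eps Heps).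
  assert (Hsqrt := sqrt_pos (n * K * C)).
  rewrite Rplus_assoc.
  apply (phi_le_barrier V (fun z s => - DeltaPsi nbrs w mu psi (fun y => u y s) z)
           (fun z s => - OmegaPsi nbrs w mu dpsi (fun y => u y s) z)
           n (sqrt (n * K * C) + eps) (Dmu * s0) (2 * K * C) (Dmu * psi 1));
    [lra | lra | | apply Rmult_le_pos; lra | | | | exact Ht].
  - nra.
  - intros z s Hs. apply (is_derive_opp (K := R_AbsRing) (V := R_NormedModule)).
    apply DeltaPsi_heat_derive; auto.
  - intros z s Hs. apply (neg_DeltaPsi_le V nbrs w mu psi Dmu); auto. intro y; apply Hu_pos; lra.
  - intros z s M Hs Hz HM.
    apply (neg_OmegaPsi_le V nbrs w mu psi dpsi Dmu Dw s0); auto. intro y; apply Hu_pos; lra.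
Qed.
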